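(* Let $a,c>0$ and $b,d<0$ be real numbers with $x_A<x_B$, and let $W_0(z)=1$, $W_1(z)=z$, $W_n(z)=(az+b)W_{n-1}(z)+(cz+d)W_{n-2}(z)$ for $n\ge2$. Then every $W_n(z)$ is real-rooted with $n$ distinct zeros; denoting by $R_n$ the zero set of $W_n(z)$, we have $R_n\subset(u,v)$ and $R_{n+1}$ strictly interlaces $R_n$ for every $n\ge0$. Moreover, the bound is sharp: both $u$ and $v$ are limits of zeros of $\{W_n(z)\}$.
   Context: Notation: $A(z)=az+b$, $B(z)=cz+d$, $x_A=-b/a$, $x_B=-d/c$, $\Delta_\Delta=c^2-a^2B(x_A)$, $x_\Delta^\pm=x_A+\frac{-2c\pm2\sqrt{\Delta_\Delta}}{a^2}$, $g(z)=(1-a)z^2-(b+c)z-d$, $\Delta_g=(b+c)^2+4d(1-a)$, $F=\Delta_g-\Delta_\Delta=d(a-2)^2+bc(2-a)+b^2$. The zeros of $g$ are $x_g^\pm=\frac{b+c}{2(1-a)}\pm\frac{\sqrt{\Delta_g}}{2|1-a|}$ if $a\neq1$, and $x_g^\pm=-d/(b+c)$ if $a=1$ and $b+c\ne0$. Define $(u,v)=(x_\Delta^-,x_\Delta^+)$ if $a<2$ and $F\le0$; $(u,v)=(x_g^-,x_g^+)$ if $a>2$ and $F<0$; $(u,v)=(x_g^+,x_\Delta^+)$ if $a<1$ and $F>0$; and $(u,v)=(x_g^-,x_\Delta^+)$ otherwise. For finite $X,Y\subset\mathbb{R}$ with $|X|-|Y|\in\{0,1\}$, $X$ strictly interlaces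 $Y$ if their elements can be ordered as $x_1<y_1<x_2<y_2<\cdots$. A number $z^*$ is a limit of zeros if there exist zeros $z_n$ of $W_n$ with $z_n\to z^*$. *)

From Stdlib Require Import Reals Lra List Sorting.Sorted Permutation.
Import ListNotations.
Open Scope R_scope.

Fixpoint W (a b c d : R) (n : nat) (z : R) : R :=
  match n with
  | O => 1
  | S m =>
      match m with
      | O => z
      | S k => (a * z + b) * W a b c d m z + (c * z + d) * W a b c d k z
      end
  end.

Definition xA (a b : R) : R := - b / a.
Definition xB (c d : R) : R := - d / c.
Definition Bfun (c d z : R) : R := c * z + d.
Definition DeltaDelta (a b c d : R) : R := c ^ 2 - a ^ 2 * Bfun c d (xA a b).
Definition xDelta_minus (a b c d : R) : R :=
  xA a b + (- 2 * c - 2 * sqrt (DeltaDelta a b c d)) / a ^ 2.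
Definition xDelta_plus (a b c d : R) : R :=
  xA a b + (- 2 * c + 2 * sqrt (DeltaDelta a b c d)) / a ^ 2.
Definition Deltag (a b c d : R) : R := (b + c) ^ 2 + 4 * d * (1 - a).
Definition Ffun (a b c d : R) : R := Deltag a b c d - DeltaDelta a b c d.

(* zeros of g; when a = 1 and b + c = 0 the value is irrelevant (never used) *)
Definition xg_minus (a b c d : R) : R :=
  if Req_EM_T a 1 then - d / (b + c)
  else (b + c) / (2 * (1 - a)) - sqrt (Deltag a b c d) / (2 * Rabs (1 - a)).
Definition xg_plus (a b c d : R) : R :=
  if Req_EM_T a 1 then - d / (b + c)
  else (b + c) / (2 * (1 - a)) + sqrt (Deltag a b c d) / (2 * Rabs (1 - a)).

Definition uv (a b c d : R) : R * R :=
  let F := Ffun a b c d in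
  if Rlt_dec a 2 then
    if Rle_dec F 0 then (xDelta_minus a b c d, xDelta_plus a b c d)
    else if Rlt_dec a 1 then (xg_plus a b c d, xDelta_plus a b c d)
    else (xg_minus a b c d, xDelta_plus a b c d)
  else if Rlt_dec 2 a then
    if Rlt_dec F 0 then (xg_minus a b c d, xg_plus a b c d)
    else (xg_minus a b c d, xDelta_plus a b c d)
  else (xg_minus a b c d, xDelta_plus a b c d).

Definition prod_lin (rs : list R) (z : R) : R :=
  fold_right (fun r acc => (z - r) * acc) 1 rs.

Definition zero_list (a b c d : R) (n : nat) (rs : list R) : Prop :=
  NoDup rs /\ forall z, W a b c d n z = 0 <-> In z rs.

Fixpoint interleave (xs ys : list R) : list R :=
  match xs with
  | [] => ys
  | x :: xs' =>
      match ys with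
      | [] => x :: xs'
      | y :: ys' => x :: y :: interleave xs' ys'
      end
  end.

(* X strictly interlaces Y: |X| - |Y| in {0,1} and the elements can be
   ordered as x1 < y1 < x2 < y2 < ... *)
Definition strictly_interlaces (X Y : list R) : Prop :=
  exists xs ys, Permutation X xs /\ Permutation Y ys /\
    (length xs = length ys \/ length xs = S (length ys)) /\
    StronglySorted Rlt (interleave xs ys).

Definition limit_of_zeros (a b c d : R) (zs : R) : Prop :=
  exists z : nat -> R,
    (forall n, (1 <= n)%nat -> W a b c d n (z n) = 0) /\ Un_cv z zs.

From Stdlib Require Import Reals Lra Lia List Sorting.Sorted Permutation Classical ClassicalEpsilon.
Import ListNotations.
Open Scope R_scope.

(* For fixed [z] the sequence [n |-> W_n(z)] obeys the constant-coefficient recurrence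
   [x_(n+2) = A(z) x_(n+1) + B(z) x_n] with [x_0 = 1], [x_1 = z].  When [B(z) < 0] such a
   sequence stays positive iff the roots [mu <= lam] of [X^2 - A(z) X - B(z)] are real and
   positive and [z >= mu]; otherwise its successive ratios drift down until it changes sign.
   Applied to [W_n(z)] and to [(-1)^n W_n(z)], this condition describes exactly the half-lines
   [z >= v] and [z <= u]; the case distinction defining [(u, v)] is the explicit solution of
   these quadratic inequalities.
   At a zero [y] of [W_(n+1)] one has [W_(n+2)(y) = B(y) W_n(y)] with [B(y) < 0], so by
   induction [W_(n+2)] alternates in sign along [u, y_1, ..., y_(n+1), x_B] and the
   intermediate value theorem gives [n + 2] interlacing zeros.  For sharpness, just inside
   [(u, v)] some [W_n] has the wrong sign, hence a zero nearby, and interlacing makes the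
   extremal zeros move monotonically outwards. *)

Lemma neg1_pow_sqr n : (-1) ^ n * (-1) ^ n = 1.
Proof. rewrite <- Rpow_mult_distr. replace (-1 * -1) with 1 by ring. apply pow1. Qed.

Lemma neg1_pow_sign_change n x y : 0 < (-1) ^ n * x -> (-1) ^ n * y < 0 -> x * y < 0.
Proof.
  intros hx hy.
  replace (x * y) with (((-1) ^ n * x) * ((-1) ^ n * y))
    by (transitivity ((-1) ^ n * (-1) ^ n * (x * y)); [ring | rewrite neg1_pow_sqr; ring]).
  nra.
Qed.

Lemma prod_sub_neg_iff r1 r2 z : r1 < r2 -> ((z - r1) * (z - r2) < 0 <-> r1 < z < r2).
Proof.
  intro h. split.
  - intro hz. split; apply Rnot_le_lt; intro; nra.
  - intros [h1 h2]. nra.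
Qed.

Lemma prod_sub_nonpos_iff r1 r2 z : r1 < r2 -> ((z - r1) * (z - r2) <= 0 <-> r1 <= z <= r2).
Proof.
  intro h. split.
  - intro hz. split; apply Rnot_lt_le; intro; nra.
  - intros [h1 h2]. nra.
Qed.

Lemma Un_cv_of_dist_nonincr (m : nat -> R) l :
  (forall n, (1 <= n)%nat -> Rabs (m (S n) - l) <= Rabs (m n - l)) ->
  (forall eps, 0 < eps -> exists n, (1 <= n)%nat /\ Rabs (m n - l) < eps) ->
  Un_cv m l.
Proof.
  intros hmono happ eps heps. destruct (happ eps heps) as [N [hN hm]].
  exists N. intros k hk. unfold R_dist.
  induction hk as [|k hk IH]; [exact hm|]. specialize (hmono k ltac:(lia)). lra.
Qed.

(** * Linear recurrences with constant coefficients *)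

Lemma nat_ind2 (P : nat -> Prop) :
  P 0%nat -> P 1%nat -> (forall n, P n -> P (S n) -> P (S (S n))) -> forall n, P n.
Proof.
  intros h0 h1 hS n.
  assert (hpair : P n /\ P (S n)) by (induction n as [|n [IH IH']]; auto).
  apply hpair.
Qed.

Fixpoint lin_rec (al be p : R) (n : nat) : R :=
  match n with
  | O => 1
  | S m =>
      match m with
      | O => p
      | S k => al * lin_rec al be p m + be * lin_rec al be p k
      end
  end.

Lemma lin_rec_SS al be p n :
  lin_rec al be p (S (S n)) = al * lin_rec al be p (S n) + be * lin_rec al be p n.
Proof. reflexivity. Qed.

(* The roots [mu <= lam] of [X^2 - al X - be] are real and positive, and [mu <= p]. *)
Definition lin_rec_pos_cond (al be p : R) : Prop :=
  0 < al /\ 0 <= al ^ 2 + 4 * be /\ (al <= 2 * p \/ p ^ 2 - al * p - be <= 0).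

Lemma lin_rec_pos al be p : be < 0 -> lin_rec_pos_cond al be p ->
  forall n, 0 < lin_rec al be p n.
Proof.
  intros hbe (hal & hD & hp).
  set (s := sqrt (al ^ 2 + 4 * be)).
  assert (hs0 : 0 <= s) by apply sqrt_pos.
  assert (hs2 : s * s = al ^ 2 + 4 * be) by (apply sqrt_sqrt; lra).
  assert (hsal : s < al) by nra.
  set (mu := (al - s) / 2). set (lam := (al + s) / 2).
  assert (hmu : 0 < mu) by (unfold mu; lra).
  assert (hlam : 0 < lam) by (unfold lam; lra).
  assert (hsum : al = mu + lam) by (unfold mu, lam; lra).
  assert (hprod : mu * lam = - be) by (unfold mu, lam; nra).
  assert (hpm : mu <= p).
  { destruct hp as [hp|hp]; [unfold mu; lra|].
    assert (p ^ 2 - al * p - be = (p - mu) * (p - lam)) by nra.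
    destruct (Rle_dec mu p) as [h|h]; [exact h|]. exfalso.
    assert (p < lam) by (unfold mu, lam in *; lra). nra. }
  (* [lin_rec (n+1) - mu * lin_rec n] gets multiplied by [lam] at each step. *)
  assert (I : forall n, 0 < lin_rec al be p n /\
                        mu * lin_rec al be p n <= lin_rec al be p (S n)).
  { induction n as [|n [IH1 IH2]]; [simpl; lra|].
    assert (0 < mu * lin_rec al be p n) by (apply Rmult_lt_0_compat; lra).
    split; [lra|]. rewrite lin_rec_SS.
    assert (al * lin_rec al be p (S n) + be * lin_rec al be p n - mu * lin_rec al be p (S n)
            = lam * (lin_rec al be p (S n) - mu * lin_rec al be p n)) by nra.
    nra. }
  intro n; apply I.
Qed.

Lemma lin_rec_pos_cond_gap al be p : be < 0 -> 0 < p -> ~ lin_rec_pos_cond al be p ->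
  exists del, 0 < del /\ forall r, 0 < r -> r <= p -> del <= r ^ 2 - al * r - be.
Proof.
  intros hbe hp hn.
  destruct (Rle_dec al 0) as [h1|h1].
  { exists (- be). split; [lra|]. intros r hr _. nra. }
  destruct (Rlt_dec (al ^ 2 + 4 * be) 0) as [h2|h2].
  { exists (- (al ^ 2 + 4 * be) / 4). split; [lra|].
    intros r _ _. pose proof (pow2_ge_0 (r - al / 2)). nra. }
  assert (h3 : 2 * p < al /\ 0 < p ^ 2 - al * p - be).
  { split; apply Rnot_le_lt; intro; apply hn; repeat split; lra. }
  exists (p ^ 2 - al * p - be). split; [lra|]. intros r hr hrp. nra.
Qed.

(* The ratio [lin_rec (n+1) / lin_rec n] would decrease by at least [del / p] at each step. *)
Lemma lin_rec_not_pos al be p del : 0 < del ->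
  (forall r, 0 < r -> r <= p -> del <= r ^ 2 - al * r - be) ->
  ~ (forall n, 0 < lin_rec al be p n).
Proof.
  intros hdel hgap hpos.
  assert (hp : 0 < p) by exact (hpos 1%nat).
  set (r := fun n => lin_rec al be p (S n) / lin_rec al be p n).
  assert (rpos : forall n, 0 < r n) by (intro n; apply Rdiv_lt_0_compat; apply hpos).
  assert (rb : forall n, r n <= p - INR n * (del / p)).
  { induction n as [|n IH]; [unfold r; simpl; unfold Rdiv; lra|].
    assert (hn0 : 0 <= INR n * (del / p))
      by (apply Rmult_le_pos; [apply pos_INR | apply Rlt_le, Rdiv_lt_0_compat; lra]).
    assert (hrn := rpos n).
    assert (hgn := hgap (r n) hrn ltac:(lra)).
    assert (hrec : r (S n) * r n = al * r n + be).
    { unfold r. rewrite lin_rec_SS. field. split; apply Rgt_not_eq, hpos. }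
    assert (hstep : r (S n) <= r n - del / r n).
    { apply (Rmult_le_reg_r (r n)); [exact hrn|].
      unfold Rdiv. rewrite Rmult_minus_distr_r, Rmult_assoc, Rinv_l by lra. nra. }
    assert (del / p <= del / r n)
      by (apply Rmult_le_compat_l; [lra | apply Rinv_le_contravar; lra]).
    rewrite S_INR. lra. }
  destruct (INR_archimed (del / p) p) as [n hn]; [apply Rdiv_lt_0_compat; lra|].
  specialize (rb n). specialize (rpos n). lra.
Qed.

Lemma lin_rec_pos_iff al be p : be < 0 ->
  (forall n, 0 < lin_rec al be p n) <-> lin_rec_pos_cond al be p.
Proof.
  intro hbe. split; [|now apply lin_rec_pos].
  intro hpos. apply NNPP. intro hn.
  destruct (lin_rec_pos_cond_gap al be p hbe (hpos 1%nat) hn) as [del [hdel hgap]].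
  exact (lin_rec_not_pos al be p del hdel hgap hpos).
Qed.

(** * The polynomials [W_n] *)

Lemma W_SS a b c d n z : W a b c d (S (S n)) z =
  (a * z + b) * W a b c d (S n) z + (c * z + d) * W a b c d n z.
Proof. reflexivity. Qed.

Lemma W_lin_rec a b c d n z : W a b c d n z = lin_rec (a * z + b) (c * z + d) z n.
Proof.
  revert n. apply (nat_ind2 (fun n => W a b c d n z = _)); try reflexivity.
  intros n IH IH'. rewrite W_SS, lin_rec_SS, IH, IH'. reflexivity.
Qed.

Lemma W_alt_lin_rec a b c d n z :
  (-1) ^ n * W a b c d n z = lin_rec (- (a * z + b)) (c * z + d) (- z) n.
Proof.
  revert n. apply (nat_ind2 (fun n => (-1) ^ n * W a b c d n z = _)); [simpl; ring..|].
  intros n IH IH'. rewrite W_SS, lin_rec_SS, <- IH, <- IH'. simpl. ring.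
Qed.

(* Coefficient lists, constant term first. *)
Fixpoint peval (cs : list R) (z : R) : R :=
  match cs with [] => 0 | c :: cs' => c + z * peval cs' z end.

Fixpoint padd (p q : list R) : list R :=
  match p, q with
  | [], q => q
  | p, [] => p
  | x :: p', y :: q' => (x + y) :: padd p' q'
  end.

Lemma peval_padd p q z : peval (padd p q) z = peval p z + peval q z.
Proof.
  revert q; induction p as [|x p IH]; intros [|y q]; simpl; try ring.
  rewrite IH. ring.
Qed.

Lemma length_padd p q : length (padd p q) = Nat.max (length p) (length q).
Proof.
  revert q; induction p as [|x p IH]; intros [|y q]; simpl; try lia.
  rewrite IH. lia.
Qed.

Lemma peval_scale k p z : peval (map (Rmult k) p) z = k * peval p z.
Proof. induction p as [|x p IH]; simpl; [ring|]. rewrite IH; ring. Qed.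

Definition poly_deg_le (f : R -> R) (n : nat) : Prop :=
  exists cs, (length cs <= S n)%nat /\ forall z, f z = peval cs z.

Lemma poly_deg_le_add f g n :
  poly_deg_le f n -> poly_deg_le g n -> poly_deg_le (fun z => f z + g z) n.
Proof.
  intros [p [hp ef]] [q [hq eg]]. exists (padd p q). split.
  - rewrite length_padd. lia.
  - intro z. rewrite peval_padd, ef, eg. reflexivity.
Qed.

Lemma poly_deg_le_mul_lin a b f n :
  poly_deg_le f n -> poly_deg_le (fun z => (a * z + b) * f z) (S n).
Proof.
  intros [p [hp ef]]. exists (padd (map (Rmult b) p) (0 :: map (Rmult a) p)). split.
  - rewrite length_padd. simpl. rewrite !length_map. lia.
  - intro z. rewrite peval_padd. simpl. rewrite !peval_scale, ef. ring.
Qed.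

Lemma poly_deg_le_S f n : poly_deg_le f n -> poly_deg_le f (S n).
Proof. intros [p [hp ef]]. exists p. split; [lia | exact ef]. Qed.

Lemma W_poly_deg_le a b c d n : poly_deg_le (W a b c d n) n.
Proof.
  revert n. apply nat_ind2.
  - exists [1]. split; [simpl; lia | intro; simpl; ring].
  - exists [0; 1]. split; [simpl; lia | intro; simpl; ring].
  - intros n IH IH'.
    assert (h := poly_deg_le_add _ _ _ (poly_deg_le_mul_lin a b _ _ IH')
                   (poly_deg_le_S _ _ (poly_deg_le_mul_lin c d _ _ IH))).
    destruct h as [p [hp ep]]. exists p. split; [exact hp|].
    intro z. rewrite W_SS. apply ep.
Qed.

Fixpoint pdiv (cs : list R) (r : R) : list R :=
  match cs with
  | [] => []
  | c :: cs' => match cs' with [] => [] | _ => peval cs' r :: pdiv cs' r end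
  end.

Lemma peval_pdiv cs r z : peval cs z = (z - r) * peval (pdiv cs r) z + peval cs r.
Proof.
  induction cs as [|c cs IH]; simpl; [ring|].
  destruct cs as [|c' cs']; simpl; [ring|].
  simpl in IH. rewrite IH. ring.
Qed.

Lemma length_pdiv cs r : length (pdiv cs r) = pred (length cs).
Proof. induction cs as [|c [|c' cs'] IH]; simpl in *; auto. Qed.

Lemma poly_factor rs : forall f, NoDup rs -> poly_deg_le f (length rs) ->
  (forall r, In r rs -> f r = 0) -> exists k, forall z, f z = k * prod_lin rs z.
Proof.
  induction rs as [|r rs IH]; intros f hnd [cs [hl ef]] hr.
  - destruct cs as [|k [|]]; simpl in hl; try lia.
    + exists 0. intro z. rewrite ef. simpl. ring.
    + exists k. intro z. rewrite ef. simpl. ring.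
  - inversion hnd as [|? ? hrs hnd']; subst.
    assert (hfr : forall z, f z = (z - r) * peval (pdiv cs r) z).
    { intro z. rewrite ef, (peval_pdiv cs r z), <- ef, (hr r (in_eq _ _)). ring. }
    destruct (IH (peval (pdiv cs r)) hnd') as [k hk].
    + exists (pdiv cs r). split; [rewrite length_pdiv; simpl in hl; lia | reflexivity].
    + intros r' hr'.
      assert (r' - r <> 0) by (intro; apply hrs; replace r with r' by lra; exact hr').
      apply (Rmult_eq_reg_l (r' - r)); [|assumption].
      rewrite <- hfr, (hr r' (in_cons _ _ _ hr')). ring.
    + exists k. intro z. rewrite hfr, hk. simpl. ring.
Qed.

Lemma peval_continuous cs : continuity (peval cs).
Proof.
  induction cs as [|x cs IH]; simpl.
  - apply continuity_const. intros ? ?; reflexivity.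
  - apply continuity_plus; [apply continuity_const; intros ? ?; reflexivity|].
    apply continuity_mult; [apply derivable_continuous, derivable_id | exact IH].
Qed.

Lemma W_continuous a b c d n : continuity (W a b c d n).
Proof.
  destruct (W_poly_deg_le a b c d n) as [cs [_ ef]].
  intro x. apply (continuity_pt_locally_ext (peval cs) _ 1 x); [lra | intros; symmetry; apply ef |].
  apply peval_continuous.
Qed.

(** * Sorted lists and sign alternation *)

Lemma in_interleave x xs ys : In x (interleave xs ys) <-> In x xs \/ In x ys.
Proof.
  revert ys; induction xs as [|x0 xs IH]; intros [|y ys]; simpl; try tauto.
  rewrite IH. tauto.
Qed.

Lemma StronglySorted_interleave_l xs ys :
  StronglySorted Rlt (interleave xs ys) -> StronglySorted Rlt xs.
Proof.
  revert ys; induction xs as [|x xs IH]; intros [|y ys] h; simpl in *;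
    [constructor | constructor | exact h |].
  apply StronglySorted_inv in h as [h1 h2]. apply StronglySorted_inv in h1 as [h3 _].
  rewrite Forall_forall in h2.
  constructor; [eapply IH; eauto|].
  rewrite Forall_forall. intros w hw. apply h2. right. apply in_interleave. auto.
Qed.

Lemma StronglySorted_Rlt_NoDup l : StronglySorted Rlt l -> NoDup l.
Proof.
  induction l as [|x l IH]; intro h; constructor; apply StronglySorted_inv in h as [h1 h2].
  - rewrite Forall_forall in h2. intro hx. specialize (h2 x hx). lra.
  - exact (IH h1).
Qed.

Lemma interleave_lt_r xs ys x : StronglySorted Rlt (interleave ys xs) ->
  length ys = S (length xs) -> In x xs -> exists y, In y ys /\ x < y.
Proof.
  revert ys. induction xs as [|x0 xs IH]; intros ys h hl hx; [destruct hx|].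
  destruct ys as [|y ys]; simpl in hl; [lia|].
  simpl in h. apply StronglySorted_inv in h as [h1 _].
  apply StronglySorted_inv in h1 as [h3 h4]. rewrite Forall_forall in h4.
  destruct hx as [<-|hx].
  - destruct ys as [|y' ys']; simpl in hl; [lia|].
    exists y'. split; [right; left; reflexivity|].
    apply h4. apply in_interleave. left; left; reflexivity.
  - destruct (IH ys h3 ltac:(lia) hx) as [w [hw1 hw2]].
    exists w. split; [right; exact hw1 | exact hw2].
Qed.

Lemma interleave_lt_l xs ys x : StronglySorted Rlt (interleave ys xs) ->
  length ys = S (length xs) -> In x xs -> exists y, In y ys /\ y < x.
Proof.
  revert ys. induction xs as [|x0 xs IH]; intros ys h hl hx; [destruct hx|].
  destruct ys as [|y ys]; simpl in hl; try lia.
  simpl in h. apply StronglySorted_inv in h as [h1 h2].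
  apply StronglySorted_inv in h1 as [h3 _]. rewrite Forall_forall in h2.
  destruct hx as [<-|hx].
  - exists y. split; [left; reflexivity | apply h2; left; reflexivity].
  - destruct (IH ys h3 ltac:(lia) hx) as [w [hw1 hw2]].
    exists w. split; [right; exact hw1 | exact hw2].
Qed.

Lemma list_max_exists (l : list R) : l <> [] -> exists m, In m l /\ forall x, In x l -> x <= m.
Proof.
  induction l as [|x [|y l] IH]; intro h; [congruence | |].
  - exists x. split; [left; reflexivity|]. intros w [<-|[]]. lra.
  - destruct IH as [m [hm1 hm2]]; [discriminate|].
    destruct (Rle_dec m x).
    + exists x. split; [left; reflexivity|]. intros w [<-|hw]; [lra|]. specialize (hm2 w hw). lra.
    + exists m. split; [right; exact hm1|]. intros w [<-|hw]; [lra | auto].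
Qed.

Lemma prod_lin_eq0 rs z : prod_lin rs z = 0 <-> In z rs.
Proof.
  induction rs as [|r rs IH]; simpl; [split; [lra | tauto]|].
  split.
  - intro h. apply Rmult_integral in h as [h|h]; [left; lra | right; tauto].
  - intros [<-|h]; [ring|]. apply IH in h. rewrite h; ring.
Qed.

Lemma prod_lin_pos rs z : (forall r, In r rs -> r < z) -> 0 < prod_lin rs z.
Proof.
  induction rs as [|r rs IH]; simpl; intro h; [lra|].
  assert (r < z) by auto. assert (0 < prod_lin rs z) by auto. nra.
Qed.

Lemma prod_lin_sign_left rs z : (forall r, In r rs -> z < r) ->
  0 < (-1) ^ length rs * prod_lin rs z.
Proof.
  induction rs as [|r rs IH]; simpl; intro h; [lra|].
  assert (z < r) by auto. assert (0 < (-1) ^ length rs * prod_lin rs z) by auto. nra.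
Qed.

Fixpoint alternates (f : R -> R) (s : R) (l : list R) : Prop :=
  match l with [] => True | x :: l' => 0 < s * f x /\ alternates f (- s) l' end.

Lemma alternates_impl f g l : (forall y s, In y l -> 0 < s * g y -> 0 < s * f y) ->
  forall s, alternates g s l -> alternates f s l.
Proof.
  induction l as [|x l IH]; simpl; auto.
  intros h s [h1 h2]. split; eauto.
Qed.

Lemma alternates_opp f s l : alternates f s l -> alternates (fun y => - f y) (- s) l.
Proof.
  revert s. induction l as [|x l IH]; simpl; auto. intros s [h1 h2]. split; [lra|].
  exact (IH (- s) h2).
Qed.

Lemma alternates_snoc f l r s : alternates f s l ->
  0 < s * (-1) ^ length l * f r -> alternates f s (l ++ [r]).
Proof.
  revert s. induction l as [|x l IH]; simpl; intros s h hr; [split; [lra | exact I]|].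
  destruct h as [h1 h2]. split; [exact h1|]. apply IH; [exact h2|].
  replace (- s * (-1) ^ length l * f r) with (s * (-1 * (-1) ^ length l) * f r) by ring.
  exact hr.
Qed.

Lemma alternates_prod_lin xs ys : StronglySorted Rlt (interleave ys xs) ->
  length ys = S (length xs) -> alternates (prod_lin xs) ((-1) ^ length xs) ys.
Proof.
  revert ys. induction xs as [|x xs IH]; intros ys h hl.
  - destruct ys as [|y [|]]; simpl in hl; try lia. simpl. lra.
  - destruct ys as [|y ys]; simpl in hl; try lia.
    simpl in h. apply StronglySorted_inv in h as [h1 h2].
    apply StronglySorted_inv in h1 as [h3 h4].
    rewrite Forall_forall in h2, h4.
    simpl. split.
    + assert (y < x) by (apply h2; left; reflexivity).
      assert (0 < (-1) ^ length xs * prod_lin xs y).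
      { apply prod_lin_sign_left. intros r hr. apply h2. right. apply in_interleave. auto. }
      nra.
    + apply (alternates_impl _ (prod_lin xs)).
      * intros w s hw hs. assert (x < w) by (apply h4; apply in_interleave; auto).
        simpl. nra.
      * replace (- (-1 * (-1) ^ length xs)) with ((-1) ^ length xs) by ring.
        apply IH; [exact h3 | lia].
Qed.

Lemma IVT_strict f l r : continuity f -> l < r -> f l * f r < 0 ->
  exists z, l < z < r /\ f z = 0.
Proof.
  intros hc hlr hs. destruct (IVT_cor f l r hc) as [z [[h1 h2] hz]]; [lra..|].
  exists z. split; [|exact hz].
  split; [destruct h1 as [h1|e] | destruct h2 as [h2|e]]; auto;
    subst; rewrite hz in hs; lra.
Qed.

Lemma alternates_zeros_interlace f r : continuity f -> forall ys l s,
  StronglySorted Rlt ys -> (forall y, In y ys -> l < y < r) -> l < r ->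
  alternates f s (l :: ys ++ [r]) ->
  exists zs, length zs = S (length ys) /\ (forall z, In z zs -> f z = 0 /\ l < z < r) /\
    StronglySorted Rlt (interleave zs ys).
Proof.
  intros hc ys. induction ys as [|y ys IH]; intros l s hs hy hlr halt.
  - simpl in halt. destruct halt as [h1 [h2 _]].
    destruct (IVT_strict f l r hc hlr) as [z [hz1 hz2]]; [nra|].
    exists [z]. split; [reflexivity|]. split.
    + intros w [<-|[]]. auto.
    + simpl. repeat constructor.
  - simpl in halt. destruct halt as [h1 [h2 h3]].
    assert (hyl : l < y < r) by (apply hy; left; reflexivity).
    destruct (IVT_strict f l y hc) as [z0 [hz1 hz2]]; [lra | nra |].
    apply StronglySorted_inv in hs as [hs1 hs2]. rewrite Forall_forall in hs2.
    destruct (IH y (- s) hs1) as [zs [hl [hz hss]]].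
    + intros w hw. split; [apply hs2; auto | apply hy; right; auto].
    + lra.
    + simpl. split; auto.
    + exists (z0 :: zs). split; [simpl; lia|]. split.
      * intros w [<-|hw]; [split; [auto | lra]|]. destruct (hz w hw). split; [auto | lra].
      * simpl. constructor; [constructor; auto|]; rewrite Forall_forall.
        -- intros w hw. apply in_interleave in hw as [hw|hw];
             [destruct (hz w hw); lra | apply hs2; auto].
        -- intros w [<-|hw]; [lra|]. apply in_interleave in hw as [hw|hw];
             [destruct (hz w hw); lra | specialize (hs2 w hw); lra].
Qed.

(** * Where [W_n] has constant sign *)

Section Window.

Variables a b c d : R.
Hypothesis ha : 0 < a.
Hypothesis hc : 0 < c.
Hypothesis hb : b < 0.
Hypothesis hd : d < 0.
Hypothesis hAB : xA a b < xB c d.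

Local Notation xa := (xA a b).
Local Notation xb := (xB c d).
Local Notation xm := (xDelta_minus a b c d).
Local Notation xp := (xDelta_plus a b c d).
Local Notation u := (fst (uv a b c d)).
Local Notation v := (snd (uv a b c d)).
Local Notation xgm := (xg_minus a b c d).
Local Notation xgp := (xg_plus a b c d).
Local Notation z0 := (b / (2 - a)).

Definition gfun (z : R) : R := (1 - a) * z ^ 2 - (b + c) * z - d.
(* [phi z = 2 z - A(z)]: its sign compares [W_1(z) / W_0(z) = z] with half of [A(z)]. *)
Definition phi (z : R) : R := (2 - a) * z - b.
Definition disc (z : R) : R := (a * z + b) ^ 2 + 4 * (c * z + d).

Definition left_cond (z : R) : Prop := z <= xm /\ (phi z <= 0 \/ gfun z <= 0).
Definition right_cond (z : R) : Prop := xp <= z /\ (0 <= phi z \/ gfun z <= 0).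

Lemma A_neg_iff z : a * z + b < 0 <-> z < xa.
Proof.
  unfold xA. split; intro h.
  - apply (Rmult_lt_reg_l a); [exact ha|]. replace (a * (- b / a)) with (- b) by (field; lra). lra.
  - apply (Rmult_lt_compat_l a) in h; [|exact ha].
    replace (a * (- b / a)) with (- b) in h by (field; lra). lra.
Qed.

Lemma B_neg_iff z : c * z + d < 0 <-> z < xb.
Proof.
  unfold xB. split; intro h.
  - apply (Rmult_lt_reg_l c); [exact hc|]. replace (c * (- d / c)) with (- d) by (field; lra). lra.
  - apply (Rmult_lt_compat_l c) in h; [|exact hc].
    replace (c * (- d / c)) with (- d) in h by (field; lra). lra.
Qed.

Lemma A_xA : a * xa + b = 0.
Proof. unfold xA. field. lra. Qed.

Lemma B_xB : c * xb + d = 0.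
Proof. unfold xB. field. lra. Qed.

Lemma xA_pos : 0 < xa.
Proof. apply A_neg_iff. lra. Qed.

Lemma DeltaDelta_gt : c ^ 2 < DeltaDelta a b c d.
Proof.
  assert (hB : c * xa + d < 0) by (apply B_neg_iff; exact hAB).
  assert (0 < a ^ 2) by nra.
  unfold DeltaDelta, Bfun. nra.
Qed.

Lemma disc_factor z : disc z = a ^ 2 * (z - xm) * (z - xp).
Proof.
  pose proof DeltaDelta_gt as hDD.
  unfold xDelta_minus, xDelta_plus.
  set (s := sqrt (DeltaDelta a b c d)).
  assert (hs : s * s = DeltaDelta a b c d) by (apply sqrt_sqrt; nra).
  unfold DeltaDelta, Bfun, xA in hs. unfold disc, xA.
  replace (a ^ 2 * (z - (- b / a + (-2 * c - 2 * s) / a ^ 2)) *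
     (z - (- b / a + (-2 * c + 2 * s) / a ^ 2))) with
    ((a * z + b) ^ 2 + 4 * c * z + 4 * b * c / a + 4 * (c ^ 2 - s * s) / a ^ 2) by (field; lra).
  rewrite hs. field. lra.
Qed.

Lemma xm_lt_xA : xm < xa.
Proof.
  pose proof DeltaDelta_gt as hDD. unfold xDelta_minus.
  assert (hs : 0 <= sqrt (DeltaDelta a b c d)) by apply sqrt_pos.
  assert (0 < / a ^ 2) by (apply Rinv_0_lt_compat; nra).
  unfold Rdiv. nra.
Qed.

Lemma xA_lt_xp : xa < xp.
Proof.
  pose proof DeltaDelta_gt as hDD. unfold xDelta_plus.
  set (s := sqrt (DeltaDelta a b c d)).
  assert (hs : s * s = DeltaDelta a b c d) by (apply sqrt_sqrt; nra).
  assert (hs0 : 0 <= s) by apply sqrt_pos.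
  assert (c < s) by nra.
  assert (0 < / a ^ 2) by (apply Rinv_0_lt_compat; nra).
  unfold Rdiv. nra.
Qed.

Lemma disc_phi_gfun z : disc z = phi z ^ 2 - 4 * gfun z.
Proof. unfold disc, phi, gfun. ring. Qed.

Lemma disc_nonneg_left z : z < xa -> (0 <= disc z <-> z <= xm).
Proof.
  intro hz. pose proof xm_lt_xA. pose proof xA_lt_xp. rewrite disc_factor.
  assert (0 < a ^ 2) by nra.
  split; intro h.
  - apply Rnot_lt_le; intro.
    assert ((z - xm) * (z - xp) < 0) by (apply prod_sub_neg_iff; lra). nra.
  - assert (0 <= (z - xm) * (z - xp)) by nra. nra.
Qed.

Lemma disc_nonneg_right z : xa < z -> (0 <= disc z <-> xp <= z).
Proof.
  intro hz. pose proof xm_lt_xA. pose proof xA_lt_xp. rewrite disc_factor.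
  assert (0 < a ^ 2) by nra.
  split; intro h.
  - apply Rnot_lt_le; intro.
    assert ((z - xm) * (z - xp) < 0) by (apply prod_sub_neg_iff; lra). nra.
  - assert (0 <= (z - xm) * (z - xp)) by nra. nra.
Qed.

Lemma lin_rec_pos_cond_left z :
  lin_rec_pos_cond (- (a * z + b)) (c * z + d) (- z) <-> left_cond z.
Proof.
  unfold lin_rec_pos_cond, left_cond. pose proof xm_lt_xA.
  split.
  - intros (h1 & h2 & h3). assert (hz : z < xa) by (apply A_neg_iff; lra).
    split; [apply disc_nonneg_left; [exact hz | unfold disc; lra]|].
    unfold phi, gfun. destruct h3; [left | right]; nra.
  - intros [hz h]. assert (hza : a * z + b < 0) by (apply A_neg_iff; lra).
    apply disc_nonneg_left in hz; [|lra]. unfold disc, phi, gfun in *.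
    repeat split; [lra | lra |]. destruct h; [left | right]; nra.
Qed.

Lemma lin_rec_pos_cond_right z :
  lin_rec_pos_cond (a * z + b) (c * z + d) z <-> right_cond z.
Proof.
  unfold lin_rec_pos_cond, right_cond. pose proof xA_lt_xp.
  split.
  - intros (h1 & h2 & h3).
    assert (hz : xa < z) by (apply Rnot_le_lt; intro h; apply Rle_lt_or_eq in h as [h|h];
      [apply A_neg_iff in h; lra | subst z; rewrite A_xA in h1; lra]).
    split; [apply disc_nonneg_right; [exact hz | unfold disc; lra]|].
    unfold phi, gfun. destruct h3; [left | right]; nra.
  - intros [hz h].
    assert (hza : 0 < a * z + b) by (pose proof A_xA; nra).
    apply disc_nonneg_right in hz; [|lra]. unfold disc, phi, gfun in *.
    repeat split; [lra | lra |]. destruct h; [left | right]; nra.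
Qed.

Lemma W_pos_ge_xB z : xb <= z -> forall n, 0 < W a b c d n z.
Proof.
  intro hz. pose proof A_xA. pose proof B_xB.
  assert (hA : 0 < a * z + b) by nra.
  assert (hB : 0 <= c * z + d) by nra.
  apply nat_ind2; [simpl; lra | simpl; pose proof xA_pos; lra |].
  intros n h h'. rewrite W_SS. nra.
Qed.

Lemma W_alt_pos_iff z : z < xb -> (forall n, 0 < (-1) ^ n * W a b c d n z) <-> left_cond z.
Proof.
  intro hz. apply B_neg_iff in hz.
  rewrite <- lin_rec_pos_cond_left, <- (lin_rec_pos_iff _ _ _ hz).
  split; intros h n; [rewrite <- W_alt_lin_rec | rewrite W_alt_lin_rec]; apply h.
Qed.

Lemma W_pos_iff z : z < xb -> (forall n, 0 < W a b c d n z) <-> right_cond z.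
Proof.
  intro hz. apply B_neg_iff in hz.
  rewrite <- lin_rec_pos_cond_right, <- (lin_rec_pos_iff _ _ _ hz).
  split; intros h n; [rewrite <- W_lin_rec | rewrite W_lin_rec]; apply h.
Qed.

Lemma Deltag_pos w : (1 - a) * gfun w < 0 -> 0 < Deltag a b c d.
Proof.
  intro hw.
  assert (4 * (1 - a) * gfun w = (2 * (1 - a) * w - (b + c)) ^ 2 - Deltag a b c d)
    by (unfold gfun, Deltag; ring).
  pose proof (pow2_ge_0 (2 * (1 - a) * w - (b + c))). lra.
Qed.

Lemma gfun_factor : a <> 1 -> 0 < Deltag a b c d ->
  xgm < xgp /\ forall z, gfun z = (1 - a) * (z - xgm) * (z - xgp).
Proof.
  intros h1 hD. unfold xg_minus, xg_plus. destruct (Req_EM_T a 1) as [e|_]; [contradiction|].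
  set (sg := sqrt (Deltag a b c d)). set (r := Rabs (1 - a)).
  assert (hs : sg * sg = Deltag a b c d) by (apply sqrt_sqrt; lra).
  assert (hs0 : 0 < sg) by (apply sqrt_lt_R0; lra).
  assert (hr0 : 0 < r) by (apply Rabs_pos_lt; lra).
  assert (hr : r * r = (1 - a) * (1 - a))
    by (unfold r; rewrite <- Rabs_mult; apply Rabs_right; nra).
  split; [assert (0 < sg / (2 * r)) by (apply Rdiv_lt_0_compat; lra); lra|].
  intro z. unfold gfun.
  replace ((1 - a) * (z - ((b + c) / (2 * (1 - a)) - sg / (2 * r))) *
    (z - ((b + c) / (2 * (1 - a)) + sg / (2 * r))))
    with ((1 - a) * z ^ 2 - (b + c) * z
          + ((b + c) ^ 2 - (sg * sg) * ((1 - a) * (1 - a)) / (r * r)) / (4 * (1 - a)))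
    by (field; lra).
  rewrite hr, hs. unfold Deltag. field. lra.
Qed.

Lemma gfun_nonpos_iff_concave w : 1 < a -> 0 < gfun w ->
  forall z, gfun z <= 0 <-> z <= xgm \/ xgp <= z.
Proof.
  intros h1 hw. destruct (gfun_factor ltac:(lra) (Deltag_pos w ltac:(nra))) as [hr hg].
  intro z. rewrite hg. pose proof (prod_sub_neg_iff _ _ z hr) as hneg.
  split; intro h.
  - apply NNPP. intro hn. assert ((z - xgm) * (z - xgp) < 0) by (apply hneg; lra). nra.
  - assert (0 <= (z - xgm) * (z - xgp))
      by (apply Rnot_lt_le; intro hn; apply hneg in hn; lra).
    nra.
Qed.

Lemma gfun_nonpos_iff_convex w : a < 1 -> gfun w < 0 ->
  forall z, gfun z <= 0 <-> xgm <= z <= xgp.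
Proof.
  intros h1 hw. destruct (gfun_factor ltac:(lra) (Deltag_pos w ltac:(nra))) as [hr hg].
  intro z. rewrite hg, <- (prod_sub_nonpos_iff _ _ z hr).
  split; intro h; [apply Rnot_lt_le; intro | ]; nra.
Qed.

Lemma phi_z0 : a <> 2 -> forall z, phi z = (2 - a) * (z - z0).
Proof. intros h z. unfold phi. field. lra. Qed.

Lemma disc_z0 : a <> 2 -> (2 - a) ^ 2 * disc z0 = 4 * Ffun a b c d.
Proof.
  intro h. unfold disc, Ffun, Deltag, DeltaDelta, Bfun, xA. field. lra.
Qed.

Lemma gfun_z0 : a <> 2 -> gfun z0 = - disc z0 / 4.
Proof. intro h. rewrite disc_phi_gfun, (phi_z0 h). field; lra. Qed.

Lemma gfun_root_disc z : disc z = 0 -> gfun z = phi z ^ 2 / 4.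
Proof. rewrite disc_phi_gfun. lra. Qed.

Lemma disc_xm : disc xm = 0.
Proof. rewrite disc_factor. ring. Qed.

Lemma disc_xp : disc xp = 0.
Proof. rewrite disc_factor. ring. Qed.

Lemma z0_neg : a < 2 -> z0 < 0.
Proof.
  intro h2. assert (0 < / (2 - a)) by (apply Rinv_0_lt_compat; lra).
  unfold Rdiv. nra.
Qed.

Lemma left_cond_F_nonpos : a < 2 -> Ffun a b c d <= 0 -> forall z, left_cond z <-> z <= xm.
Proof.
  intros h2 hF. pose proof xm_lt_xA. pose proof xA_lt_xp. pose proof xA_pos.
  pose proof (z0_neg h2).
  assert (hD : disc z0 <= 0)
    by (pose proof (disc_z0 ltac:(lra)); assert (0 < (2 - a) ^ 2) by nra; nra).
  rewrite disc_factor in hD. assert (0 < a ^ 2) by nra.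
  assert (hz0 : xm <= z0).
  { apply Rnot_lt_le. intro.
    assert (z0 - xm < 0) by lra. assert (z0 - xp < 0) by lra.
    assert (0 < (z0 - xm) * (z0 - xp)) by nra. nra. }
  intro z. unfold left_cond. rewrite (phi_z0 ltac:(lra)).
  split; [tauto|]. intro hz. split; [exact hz|]. left. nra.
Qed.

Lemma z0_lt_xm : a < 2 -> 0 < Ffun a b c d -> z0 < xm.
Proof.
  intros h2 hF. pose proof xm_lt_xA. pose proof xA_lt_xp. pose proof xA_pos.
  pose proof (z0_neg h2).
  assert (hD : 0 < disc z0)
    by (pose proof (disc_z0 ltac:(lra)); assert (0 < (2 - a) ^ 2) by nra; nra).
  rewrite disc_factor in hD. assert (0 < a ^ 2) by nra.
  apply Rnot_le_lt. intro. assert (0 <= z0 - xm) by lra. assert (z0 - xp < 0) by lra.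
  assert ((z0 - xm) * (z0 - xp) <= 0) by nra. nra.
Qed.

Lemma gfun_xm_pos : (a < 2 /\ 0 < Ffun a b c d) \/ 2 <= a -> 0 < gfun xm.
Proof.
  intro h. rewrite (gfun_root_disc _ disc_xm).
  assert (0 < phi xm); [|nra].
  destruct h as [[h2 hF] | h2].
  - pose proof (z0_lt_xm h2 hF). rewrite (phi_z0 ltac:(lra)). nra.
  - pose proof xm_lt_xA. pose proof A_xA. pose proof xA_pos. unfold phi. nra.
Qed.

Lemma gfun_z0_neg : a < 2 -> 0 < Ffun a b c d -> gfun z0 < 0.
Proof.
  intros h2 hF. rewrite (gfun_z0 ltac:(lra)).
  pose proof (disc_z0 ltac:(lra)). assert (0 < (2 - a) ^ 2) by nra. nra.
Qed.

Lemma left_cond_convex : a < 1 -> 0 < Ffun a b c d -> forall z, left_cond z <-> z <= xgp.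
Proof.
  intros h1 hF. assert (h2 : a < 2) by lra.
  pose proof (z0_lt_xm h2 hF) as hz0.
  pose proof (gfun_xm_pos (or_introl (conj h2 hF))) as hgm.
  pose proof (gfun_z0_neg h2 hF) as hg0.
  pose proof (gfun_nonpos_iff_convex _ h1 hg0) as hg.
  assert (hr1 : xgm <= z0 <= xgp) by (apply hg; lra).
  assert (hr2 : xgp < xm)
    by (apply Rnot_le_lt; intro; assert (gfun xm <= 0) by (apply hg; lra); lra).
  intro z. unfold left_cond. rewrite hg, (phi_z0 ltac:(lra)). split.
  - intros [hz [hp|hp]]; [apply Rnot_lt_le; intro; nra | lra].
  - intro hz. split; [lra|]. destruct (Rle_dec z z0); [left; nra | right; lra].
Qed.

Lemma left_cond_of_gfun : (forall z, z <= xm -> phi z <= 0 -> gfun z <= 0) ->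
  forall z, left_cond z <-> z <= xm /\ gfun z <= 0.
Proof. intros h z. unfold left_cond. split; [intros [hz [hp|hp]] | intros [hz hg]]; auto. Qed.

Lemma le_xm_gfun_nonpos_concave : 1 < a -> 0 < gfun xm ->
  forall z, z <= xm /\ gfun z <= 0 <-> z <= xgm.
Proof.
  intros h1 hgm. pose proof (gfun_nonpos_iff_concave _ h1 hgm) as hg.
  assert (hr : xgm < xm < xgp)
    by (split; apply Rnot_le_lt; intro; assert (gfun xm <= 0) by (apply hg; lra); lra).
  intro z. rewrite hg. lra.
Qed.

Lemma left_cond_concave : 1 < a -> (a < 2 -> 0 < Ffun a b c d) ->
  forall z, left_cond z <-> z <= xgm.
Proof.
  intros h1 hF.
  assert (hgm : 0 < gfun xm) by (apply gfun_xm_pos; destruct (Rlt_le_dec a 2); auto).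
  pose proof (gfun_nonpos_iff_concave _ h1 hgm) as hg.
  intro z. rewrite left_cond_of_gfun; [apply (le_xm_gfun_nonpos_concave h1 hgm)|].
  intros w hw hp. destruct (Rlt_le_dec a 2) as [h2|h2].
  - specialize (hF h2).
    assert (hz0 : z0 <= xgm).
    { apply (le_xm_gfun_nonpos_concave h1 hgm z0).
      pose proof (z0_lt_xm h2 hF). pose proof (gfun_z0_neg h2 hF). split; lra. }
    rewrite (phi_z0 ltac:(lra)) in hp. apply hg. left. nra.
  - pose proof xm_lt_xA. pose proof A_xA. pose proof xA_pos.
    assert (0 < phi w) by (unfold phi; nra). lra.
Qed.

Lemma left_cond_linear : a = 1 -> 0 < Ffun a b c d -> forall z, left_cond z <-> z <= xgm.
Proof.
  intros e1 hF. assert (h2 : a < 2) by lra.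
  pose proof (z0_lt_xm h2 hF).
  pose proof (gfun_xm_pos (or_introl (conj h2 hF))) as hgm.
  pose proof (gfun_z0_neg h2 hF) as hg0.
  assert (hgl : forall z, gfun z = - (b + c) * z - d) by (intro; unfold gfun; rewrite e1; ring).
  rewrite hgl in hgm, hg0.
  assert (hbc : b + c < 0) by nra.
  assert (hroot : - (b + c) * (- d / (b + c)) = d) by (field; lra).
  unfold xg_minus. destruct (Req_EM_T a 1) as [_|]; [|lra].
  intro z. rewrite left_cond_of_gfun.
  - rewrite hgl. split.
    + intros [hz hg]. apply Rnot_lt_le. intro hlt.
      apply (Rmult_lt_compat_l (- (b + c))) in hlt; [|lra]. nra.
    + intro hz. apply (Rmult_le_compat_l (- (b + c))) in hz; [|lra].
      split; nra.
  - intros w hw hp. rewrite (phi_z0 ltac:(lra)) in hp. rewrite hgl. nra.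
Qed.

Lemma left_cond_ge1 : 1 <= a -> (a < 2 -> 0 < Ffun a b c d) ->
  forall z, left_cond z <-> z <= xgm.
Proof.
  intros h1 hF. destruct (Rle_lt_or_eq 1 a h1) as [h1'|e1].
  - exact (left_cond_concave h1' hF).
  - exact (left_cond_linear (eq_sym e1) (hF ltac:(lra))).
Qed.

Lemma fst_uv_spec z : z <= fst (uv a b c d) <-> left_cond z.
Proof.
  unfold uv. destruct (Rlt_dec a 2) as [h2|h2].
  - destruct (Rle_dec (Ffun a b c d) 0) as [hF|hF]; simpl.
    + symmetry. exact (left_cond_F_nonpos h2 hF z).
    + destruct (Rlt_dec a 1) as [h1|h1]; simpl; symmetry.
      * apply left_cond_convex; lra.
      * apply left_cond_ge1; lra.
  - assert (hge : left_cond z <-> z <= xgm) by (apply left_cond_ge1; lra).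
    destruct (Rlt_dec 2 a); [destruct (Rlt_dec (Ffun a b c d) 0)|]; simpl; symmetry; exact hge.
Qed.

Lemma xp_lt_xB : xp < xb.
Proof.
  pose proof xm_lt_xA. pose proof A_xA. pose proof B_xB.
  assert (hA : 0 < a * xb + b) by nra.
  assert (hD : 0 < disc xb) by (unfold disc; nra).
  rewrite disc_factor in hD. assert (0 < a ^ 2) by nra.
  apply Rnot_le_lt. intro. assert (0 < xb - xm) by lra. assert (xb - xp <= 0) by lra.
  assert ((xb - xm) * (xb - xp) <= 0) by nra. nra.
Qed.

Lemma right_cond_of_phi_gfun : (forall z, xp <= z -> 0 <= phi z \/ gfun z <= 0) ->
  forall z, right_cond z <-> xp <= z.
Proof. intros h z. unfold right_cond. split; [tauto | auto]. Qed.

Lemma phi_pos_right : a <= 2 -> forall z, xa < z -> 0 < phi z.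
Proof. intros h2 z hz. pose proof xA_pos. unfold phi. nra. Qed.

Lemma xA_lt_z0 : 2 < a -> xa < z0.
Proof.
  intro h2. unfold xA. apply Rlt_0_minus.
  replace (b / (2 - a) - - b / a) with (- b * 2 / (a * (a - 2))) by (field; lra).
  apply Rdiv_lt_0_compat; nra.
Qed.

Lemma right_F_nonneg : 2 < a -> 0 <= Ffun a b c d ->
  forall z, xp <= z -> 0 <= phi z \/ gfun z <= 0.
Proof.
  intros h2 hF z hz. pose proof (xA_lt_z0 h2).
  destruct (Rle_dec z z0) as [h|h]; [left; rewrite (phi_z0 ltac:(lra)); nra | right].
  assert (hg0 : gfun z0 <= 0).
  { rewrite (gfun_z0 ltac:(lra)). pose proof (disc_z0 ltac:(lra)).
    assert (0 < (2 - a) ^ 2) by nra. assert (0 <= disc z0) by nra. lra. }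
  assert (hslope : 2 * (1 - a) * z0 - (b + c) < 0).
  { replace (2 * (1 - a) * z0 - (b + c)) with (a * b / (a - 2) - c) by (field; lra).
    assert (a * b / (a - 2) < 0) by (apply Rdiv_neg_pos; nra). lra. }
  replace (gfun z)
    with (gfun z0 + (2 * (1 - a) * z0 - (b + c)) * (z - z0) + (1 - a) * (z - z0) ^ 2)
    by (unfold gfun; ring).
  assert (0 <= (z - z0) ^ 2) by nra. nra.
Qed.

(* [g(xB) = xB ((1 - a) xB - b)] since [B(xB) = 0], and [F < 0] forces [(a - 2) xB > - b]. *)
Lemma gfun_xB_neg : 2 < a -> Ffun a b c d < 0 -> gfun xb < 0.
Proof.
  intros h2 hF. pose proof B_xB. pose proof xA_pos.
  assert (hF' : Ffun a b c d = d * (a - 2) ^ 2 + b * c * (2 - a) + b ^ 2)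
    by (unfold Ffun, Deltag, DeltaDelta, Bfun, xA; field; lra).
  assert (ht : - b < (a - 2) * xb).
  { assert (0 < c * (a - 2) * ((a - 2) * xb + b)) by nra.
    assert (0 < c * (a - 2)) by nra. nra. }
  unfold gfun. nra.
Qed.

Lemma z0_lt_xp : 2 < a -> Ffun a b c d < 0 -> z0 < xp.
Proof.
  intros h2 hF. pose proof xm_lt_xA. pose proof (xA_lt_z0 h2).
  assert (hD : disc z0 < 0)
    by (pose proof (disc_z0 ltac:(lra)); assert (0 < (2 - a) ^ 2) by nra; nra).
  rewrite disc_factor in hD. apply Rnot_le_lt. intro.
  assert (0 < z0 - xm) by lra. assert (0 <= z0 - xp) by lra.
  assert (0 <= (z0 - xm) * (z0 - xp)) by nra. assert (0 < a ^ 2) by nra. nra.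
Qed.

Lemma gfun_xp_pos : 2 < a -> Ffun a b c d < 0 -> 0 < gfun xp.
Proof.
  intros h2 hF. pose proof (z0_lt_xp h2 hF).
  rewrite (gfun_root_disc _ disc_xp), (phi_z0 ltac:(lra)).
  assert ((2 - a) * (xp - z0) < 0) by nra. nra.
Qed.

Lemma xgp_window : 2 < a -> Ffun a b c d < 0 -> xgm < xp < xgp /\ xgp < xb.
Proof.
  intros h2 hF. pose proof (gfun_xp_pos h2 hF) as hgp.
  pose proof (gfun_nonpos_iff_concave _ ltac:(lra) hgp) as hg.
  destruct (gfun_factor ltac:(lra) (Deltag_pos xp ltac:(nra))) as [_ hgf].
  assert (hr : xgm < xp < xgp)
    by (split; apply Rnot_le_lt; intro; assert (gfun xp <= 0) by (apply hg; lra); lra).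
  split; [exact hr|].
  pose proof (gfun_xB_neg h2 hF) as hgB. pose proof xp_lt_xB.
  assert (hle : xgp <= xb) by (assert (h := proj1 (hg xb) ltac:(lra)); lra).
  destruct (Rle_lt_or_eq _ _ hle) as [h|h]; [exact h|].
  rewrite <- h, hgf in hgB. lra.
Qed.

Lemma right_cond_concave : 2 < a -> Ffun a b c d < 0 -> forall z, right_cond z <-> xgp <= z.
Proof.
  intros h2 hF. destruct (xgp_window h2 hF) as [hr _]. pose proof (z0_lt_xp h2 hF).
  pose proof (gfun_nonpos_iff_concave _ ltac:(lra) (gfun_xp_pos h2 hF)) as hg.
  intro z. unfold right_cond. rewrite hg, (phi_z0 ltac:(lra)). split.
  - intros [hz [hp|hp]]; [nra | lra].
  - intro hz. split; [lra | right; right; exact hz].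
Qed.

Lemma right_cond_le2 : a <= 2 -> forall z, right_cond z <-> xp <= z.
Proof.
  intro h2. apply right_cond_of_phi_gfun. intros z hz. left.
  pose proof xA_lt_xp. apply Rlt_le, phi_pos_right; lra.
Qed.

Lemma snd_uv_lt_xB : snd (uv a b c d) < xb.
Proof.
  pose proof xp_lt_xB.
  unfold uv. destruct (Rlt_dec a 2).
  - destruct (Rle_dec (Ffun a b c d) 0); [|destruct (Rlt_dec a 1)]; simpl; lra.
  - destruct (Rlt_dec 2 a) as [h2|]; [destruct (Rlt_dec (Ffun a b c d) 0) as [hF|]|]; simpl;
      [exact (proj2 (xgp_window h2 hF)) | lra | lra].
Qed.

Lemma snd_uv_spec z : snd (uv a b c d) <= z <-> right_cond z.
Proof.
  unfold uv. destruct (Rlt_dec a 2) as [h2|h2].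
  - assert (hle : right_cond z <-> xp <= z) by (apply right_cond_le2; lra).
    destruct (Rle_dec (Ffun a b c d) 0); [|destruct (Rlt_dec a 1)]; simpl; symmetry; exact hle.
  - destruct (Rlt_dec 2 a) as [h2'|h2']; [destruct (Rlt_dec (Ffun a b c d) 0) as [hF|hF]|];
      simpl; symmetry.
    + exact (right_cond_concave h2' hF z).
    + apply right_cond_of_phi_gfun. apply right_F_nonneg; lra.
    + apply right_cond_le2. lra.
Qed.

(** * Zeros of [W_n] *)

Lemma fst_uv_neg : u < 0.
Proof.
  apply Rnot_le_lt. intro h.
  assert (h0 : left_cond 0) by (apply fst_uv_spec; exact h).
  pose proof xA_pos.
  pose proof (proj2 (W_alt_pos_iff 0 ltac:(lra)) h0 1%nat) as h1. simpl in h1. lra.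
Qed.

Lemma W_alt_pos_fst_uv n : 0 < (-1) ^ n * W a b c d n u.
Proof.
  pose proof fst_uv_neg. pose proof xA_pos.
  revert n. apply W_alt_pos_iff; [lra|]. apply fst_uv_spec. lra.
Qed.

Lemma W_pos_ge_snd_uv z : v <= z -> forall n, 0 < W a b c d n z.
Proof.
  intro hz. destruct (Rlt_le_dec z xb) as [h|h]; [|exact (W_pos_ge_xB z h)].
  apply W_pos_iff; [exact h|]. apply snd_uv_spec. exact hz.
Qed.

Definition W_root_list (n : nat) (xs : list R) : Prop :=
  length xs = n /\ StronglySorted Rlt xs /\ (forall x, In x xs -> u < x < xb) /\
  exists k, 0 < k /\ forall z, W a b c d n z = k * prod_lin xs z.

Lemma W_root_list_zero n xs : W_root_list n xs -> forall z, W a b c d n z = 0 <-> In z xs.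
Proof.
  intros (_ & _ & _ & k & hk & hW) z. rewrite hW, <- prod_lin_eq0. split; intro h.
  - apply Rmult_integral in h as [h|h]; [lra | exact h].
  - rewrite h. ring.
Qed.

Lemma W_root_list_of_zeros n zs : length zs = n -> StronglySorted Rlt zs ->
  (forall z, In z zs -> W a b c d n z = 0 /\ u < z < xb) -> W_root_list n zs.
Proof.
  intros hl hs hz. repeat split; [exact hl | exact hs | apply hz; auto | apply hz; auto |].
  destruct (poly_factor zs (W a b c d n) (StronglySorted_Rlt_NoDup _ hs)) as [k hk].
  - rewrite hl. apply W_poly_deg_le.
  - intros r hr. apply hz, hr.
  - exists k. split; [|exact hk].
    assert (0 < prod_lin zs xb) by (apply prod_lin_pos; intros r hr; apply hz, hr).
    pose proof (W_pos_ge_xB xb (Rle_refl _) n) as hpos. rewrite hk in hpos. nra.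
Qed.

Lemma W_alternates n xs ys : W_root_list n xs -> W_root_list (S n) ys ->
  StronglySorted Rlt (interleave ys xs) ->
  alternates (W a b c d (S (S n))) ((-1) ^ n) (u :: ys ++ [xb]).
Proof.
  intros (hx1 & _ & _ & k & hk & hkW) Gy hi.
  assert (Gy' := Gy). destruct Gy' as (hy1 & _ & hy3 & _).
  split.
  - replace ((-1) ^ n) with ((-1) ^ S (S n)) by (simpl; ring). apply W_alt_pos_fst_uv.
  - apply alternates_snoc.
    + apply (alternates_impl _ (fun y => - prod_lin xs y)).
      * intros y s hy hs. rewrite W_SS, (proj2 (W_root_list_zero _ _ Gy y) hy), hkW.
        assert (hB : c * y + d < 0) by (apply B_neg_iff, hy3, hy).
        assert (0 < - (c * y + d) * k) by (apply Rmult_lt_0_compat; lra).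
        replace (s * ((a * y + b) * 0 + (c * y + d) * (k * prod_lin xs y)))
          with ((- (c * y + d) * k) * (s * - prod_lin xs y)) by ring.
        apply Rmult_lt_0_compat; assumption.
      * apply alternates_opp. rewrite <- hx1. apply alternates_prod_lin; [exact hi | lia].
    + rewrite hy1. cbn [pow]. pose proof (neg1_pow_sqr n).
      pose proof (W_pos_ge_xB xb (Rle_refl _) (S (S n))). nra.
Qed.

Lemma W_root_lists n : exists xs ys,
  W_root_list n xs /\ W_root_list (S n) ys /\ StronglySorted Rlt (interleave ys xs).
Proof.
  pose proof fst_uv_neg. pose proof xA_pos.
  induction n as [|n (xs & ys & Gx & Gy & hi)].
  - exists [], [0]. split; [|split].
    + apply W_root_list_of_zeros; [reflexivity | constructor | intros z []].
    + apply W_root_list_of_zeros; [reflexivity | repeat constructor |].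
      intros z [<-|[]]. simpl. split; [reflexivity | lra].
    + simpl. repeat constructor.
  - assert (Gy' := Gy). destruct Gy' as (hy1 & hy2 & hy3 & _).
    destruct (alternates_zeros_interlace _ xb (W_continuous a b c d (S (S n))) ys u ((-1) ^ n))
      as (zs & hz1 & hz2 & hz3); [exact hy2 | exact hy3 | lra | eapply W_alternates; eauto |].
    exists ys, zs. split; [exact Gy|]. split; [|exact hz3].
    apply W_root_list_of_zeros; [lia | eapply StronglySorted_interleave_l; eauto | exact hz2].
Qed.

Lemma W_zero_window n r : W a b c d n r = 0 -> u < r < v.
Proof.
  intro hr. destruct (W_root_lists n) as (xs & _ & Gx & _ & _).
  assert (hin : In r xs) by (apply (W_root_list_zero _ _ Gx); exact hr).
  destruct Gx as (_ & _ & hwin & _). split; [apply hwin, hin|].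
  apply Rnot_le_lt. intro h. specialize (W_pos_ge_snd_uv r h n). lra.
Qed.

Lemma W_zero_lists_interlace n rs rs' :
  zero_list a b c d n rs -> zero_list a b c d (S n) rs' -> strictly_interlaces rs' rs.
Proof.
  intros [hnd hz] [hnd' hz']. destruct (W_root_lists n) as (xs & ys & Gx & Gy & hi).
  exists ys, xs. split; [|split; [|split]].
  - apply NoDup_Permutation; [exact hnd' | apply StronglySorted_Rlt_NoDup, Gy |].
    intro x. rewrite <- hz'. apply (W_root_list_zero _ _ Gy).
  - apply NoDup_Permutation; [exact hnd | apply StronglySorted_Rlt_NoDup, Gx |].
    intro x. rewrite <- hz. apply (W_root_list_zero _ _ Gx).
  - right. destruct Gx as [-> _], Gy as [-> _]. reflexivity.
  - exact hi.
Qed.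

Lemma W_zero_below n x : W a b c d n x = 0 -> exists y, W a b c d (S n) y = 0 /\ y < x.
Proof.
  intro hx. destruct (W_root_lists n) as (xs & ys & Gx & Gy & hi).
  destruct (interleave_lt_l xs ys x hi) as [y [hy1 hy2]].
  - destruct Gx as [-> _], Gy as [-> _]. reflexivity.
  - apply (W_root_list_zero _ _ Gx), hx.
  - exists y. split; [apply (W_root_list_zero _ _ Gy), hy1 | exact hy2].
Qed.

Lemma W_zero_above n x : W a b c d n x = 0 -> exists y, W a b c d (S n) y = 0 /\ x < y.
Proof.
  intro hx. destruct (W_root_lists n) as (xs & ys & Gx & Gy & hi).
  destruct (interleave_lt_r xs ys x hi) as [y [hy1 hy2]].
  - destruct Gx as [-> _], Gy as [-> _]. reflexivity.
  - apply (W_root_list_zero _ _ Gx), hx.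
  - exists y. split; [apply (W_root_list_zero _ _ Gy), hy1 | exact hy2].
Qed.

Lemma W_min_zero n : (1 <= n)%nat ->
  exists m, W a b c d n m = 0 /\ forall r, W a b c d n r = 0 -> m <= r.
Proof.
  intro hn. destruct (W_root_lists n) as (xs & _ & Gx & _ & _).
  pose proof (W_root_list_zero _ _ Gx) as hz. destruct Gx as (hl & hs & _).
  destruct xs as [|x xs]; [simpl in hl; lia|].
  apply StronglySorted_inv in hs as [_ hs]. rewrite Forall_forall in hs.
  exists x. split; [apply hz; left; reflexivity|].
  intros r hr. apply hz in hr as [<-|hr]; [lra | left; apply hs, hr].
Qed.

Lemma W_max_zero n : (1 <= n)%nat ->
  exists m, W a b c d n m = 0 /\ forall r, W a b c d n r = 0 -> r <= m.
Proof.
  intro hn. destruct (W_root_lists n) as (xs & _ & Gx & _ & _).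
  pose proof (W_root_list_zero _ _ Gx) as hz. destruct Gx as (hl & _).
  destruct (list_max_exists xs) as [m [hm1 hm2]]; [intro e; subst xs; simpl in hl; lia|].
  exists m. split; [apply hz, hm1|]. intros r hr. apply hm2, hz, hr.
Qed.

Lemma W_zero_near_fst_uv z : u < z ->
  exists n r, (1 <= n)%nat /\ W a b c d n r = 0 /\ r <= z.
Proof.
  intro hz. pose proof xA_pos.
  assert (hsign : exists n, (1 <= n)%nat /\ (-1) ^ n * W a b c d n z <= 0).
  { destruct (Rlt_le_dec z xb) as [h|h].
    - assert (hn : ~ left_cond z) by (rewrite <- fst_uv_spec; lra).
      rewrite <- (W_alt_pos_iff z h) in hn. apply not_all_ex_not in hn as [n hn].
      exists n. split; [destruct n; [simpl in hn; lra | lia] | lra].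
    - exists 1%nat. split; [lia | simpl; lra]. }
  destruct hsign as [n [hn hW]]. exists n.
  destruct (Req_dec (W a b c d n z) 0) as [e|e]; [exists z; auto with real|].
  assert (hW' : (-1) ^ n * W a b c d n z < 0).
  { destruct (Rle_lt_or_eq _ _ hW) as [h|h]; [exact h|]. exfalso. apply e.
    rewrite <- (Rmult_1_l (W a b c d n z)), <- (neg1_pow_sqr n), Rmult_assoc, h. ring. }
  destruct (IVT_strict (W a b c d n) u z (W_continuous a b c d n)) as [r [hr1 hr2]];
    [exact hz | exact (neg1_pow_sign_change _ _ _ (W_alt_pos_fst_uv n) hW') |].
  exists r. repeat split; [exact hn | exact hr2 | lra].
Qed.

Lemma W_zero_near_snd_uv z : z < v ->
  exists n r, (1 <= n)%nat /\ W a b c d n r = 0 /\ z <= r.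
Proof.
  intro hz. pose proof snd_uv_lt_xB.
  assert (hn : ~ right_cond z) by (rewrite <- snd_uv_spec; lra).
  rewrite <- (W_pos_iff z ltac:(lra)) in hn. apply not_all_ex_not in hn as [n hn].
  assert (hn1 : (1 <= n)%nat) by (destruct n; [simpl in hn; lra | lia]).
  exists n. destruct (Req_dec (W a b c d n z) 0) as [e|e]; [exists z; auto with real|].
  destruct (IVT_strict (W a b c d n) z v (W_continuous a b c d n)) as [r [hr1 hr2]];
    [exact hz | pose proof (W_pos_ge_snd_uv v (Rle_refl _) n); nra |].
  exists r. repeat split; [exact hn1 | exact hr2 | lra].
Qed.

Lemma fst_uv_limit : limit_of_zeros a b c d u.
Proof.
  destruct (choice (fun n m => (1 <= n)%nat ->
      W a b c d n m = 0 /\ forall r, W a b c d n r = 0 -> m <= r)) as [m hm].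
  { intro n. destruct (Nat.le_gt_cases 1 n) as [hn|hn]; [|exists 0; lia].
    destruct (W_min_zero n hn) as [m hm]. exists m. auto. }
  exists m. split; [intros n hn; apply hm, hn|].
  apply Un_cv_of_dist_nonincr.
  - intros n hn. destruct (hm n hn) as [h1 _]. destruct (hm (S n) ltac:(lia)) as [h2 h2'].
    destruct (W_zero_below n (m n) h1) as [y [hy1 hy2]]. specialize (h2' y hy1).
    pose proof (W_zero_window _ _ h1). pose proof (W_zero_window _ _ h2).
    rewrite !Rabs_right by lra. lra.
  - intros eps heps. destruct (W_zero_near_fst_uv (u + eps / 2)) as (n & r & hn & hr & hrz); [lra|].
    exists n. split; [exact hn|]. destruct (hm n hn) as [h1 h1']. specialize (h1' r hr).
    pose proof (W_zero_window _ _ h1). rewrite Rabs_right by lra. lra.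
Qed.

Lemma snd_uv_limit : limit_of_zeros a b c d v.
Proof.
  destruct (choice (fun n m => (1 <= n)%nat ->
      W a b c d n m = 0 /\ forall r, W a b c d n r = 0 -> r <= m)) as [m hm].
  { intro n. destruct (Nat.le_gt_cases 1 n) as [hn|hn]; [|exists 0; lia].
    destruct (W_max_zero n hn) as [m hm]. exists m. auto. }
  exists m. split; [intros n hn; apply hm, hn|].
  apply Un_cv_of_dist_nonincr.
  - intros n hn. destruct (hm n hn) as [h1 _]. destruct (hm (S n) ltac:(lia)) as [h2 h2'].
    destruct (W_zero_above n (m n) h1) as [y [hy1 hy2]]. specialize (h2' y hy1).
    pose proof (W_zero_window _ _ h1). pose proof (W_zero_window _ _ h2).
    rewrite !Rabs_left by lra. lra.
  - intros eps heps. destruct (W_zero_near_snd_uv (v - eps / 2)) as (n & r & hn & hr & hrz); [lra|].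
    exists n. split; [exact hn|]. destruct (hm n hn) as [h1 h1']. specialize (h1' r hr).
    pose proof (W_zero_window _ _ h1). rewrite Rabs_left by lra. lra.
Qed.

End Window.

Theorem theorem3p4 (a b c d : R)
  (ha : 0 < a) (hc : 0 < c) (hb : b < 0) (hd : d < 0)
  (hAB : xA a b < xB c d) :
  (* each W_n is real-rooted with n distinct zeros *)
  (forall n : nat, exists (k : R) (rs : list R),
      k <> 0 /\ length rs = n /\ StronglySorted Rlt rs /\
      forall z, W a b c d n z = k * prod_lin rs z) /\
  (* R_n is contained in (u, v) *)
  (forall n rs, zero_list a b c d n rs ->
      forall r, In r rs -> fst (uv a b c d) < r < snd (uv a b c d)) /\
  (* R_{n+1} strictly interlaces R_n *)
  (forall n rs rs', zero_list a b c d n rs -> zero_list a b c d (S n) rs' ->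
      strictly_interlaces rs' rs) /\
  (* sharpness *)
  limit_of_zeros a b c d (fst (uv a b c d)) /\
  limit_of_zeros a b c d (snd (uv a b c d)).
Proof.
  split; [|split; [|split; [|split]]].
  - intro n.
    destruct (W_root_lists a b c d ha hc hb hAB n) as (xs & _ & (hl & hs & _ & k & hk & hW) & _).
    exists k, xs. repeat split; [lra | exact hl | exact hs | exact hW].
  - intros n rs [_ hz] r hr. eapply W_zero_window; try eassumption. apply hz, hr.
  - intros n rs rs'. apply W_zero_lists_interlace; assumption.
  - apply fst_uv_limit; assumption.
  - apply snd_uv_limit; assumption.
Qed.
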